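(* Let $n\ge 2$, let $g_1(s),\dots,g_n(s)$ and $f(s)$ be rational proper transfer functions, and let $L$ be a real symmetric $n\times n$ graph Laplacian with eigenvalues $0=\lambda_1(L)\le\lambda_2(L)\le\cdots\le\lambda_n(L)$. Define $$T(s)=\big(I_n+\mathrm{diag}\{g_i(s)\}f(s)L\big)^{-1}\mathrm{diag}\{g_i(s)\}=\big(\mathrm{diag}\{g_i^{-1}(s)\}+f(s)L\big)^{-1},\qquad \bar g(s)=\Big(\frac1n\sum_{i=1}^n g_i^{-1}(s)\Big)^{-1}.$$ Let $s_0\in\mathbb{C}$ be a point that is not a pole of $f(s)$, and suppose there are constants $M_1,M_2>0$ with $|\bar g(s_0)|\le M_1$ and $\max_{1\le i\le n}|g_i^{-1}(s_0)|\le M_2$. Then, whenever $|f(s_0)|\lambda_2(L)> M_2+M_1M_2^2$, $$\Big\|T(s_0)-\frac1n\bar g(s_0)\mathbf{1}\mathbf{1}^\top\Big\|\le \frac{(M_1M_2+1)^2}{|f(s_0)|\lambda_2(L)-M_2-M_1M_2^2}.$$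
   Context: $\mathbf{1}=[1,\dots,1]^\top\in\mathbb{R}^n$, $I_n$ is the $n\times n$ identity, $\|\cdot\|$ is the spectral norm, and $\mathrm{diag}\{x_i\}$ is the diagonal matrix with entries $x_i$. A (weighted, undirected) graph Laplacian $L$ is real symmetric positive semidefinite with $L\mathbf{1}=0$; $\lambda_i(L)$ denotes its $i$-th smallest eigenvalue. *)

From HB Require Import structures.
From mathcomp Require Import all_boot all_order all_algebra.
From mathcomp Require Import classical_sets reals.
From mathcomp Require Import complex.
Set Implicit Arguments. Unset Strict Implicit. Unset Printing Implicit Defensive.
Import Order.TTheory GRing.Theory Num.Theory.
Local Open Scope ring_scope.

Section Defs.
Variable R : realType.

Definition cabs (z : R[i]) : R := Normc.normc z.

Definition vnorm n (x : 'cV[R[i]]_n) : R :=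
  Num.sqrt (\sum_(i < n) cabs (x i 0) ^+ 2).

Definition specnorm n (A : 'M[R[i]]_n) : R :=
  sup [set vnorm (A *m x) | x in [set x : 'cV[R[i]]_n | vnorm x <= 1]].

Definition is_laplacian n (L : 'M[R]_n) : Prop :=
  [/\ L^T = L,
      (forall x : 'cV[R]_n, 0 <= (x^T *m L *m x) 0 0)
    & L *m (const_mx 1 : 'cV[R]_n) = 0].

(* A rational transfer function with real coefficients is represented by a
   numerator/denominator pair (p, q) in reduced form; it is proper when
   deg p <= deg q. *)
Definition proper_rat (p q : {poly R}) : Prop :=
  [/\ q != 0, coprimep p q & (size p <= size q)%N].

Definition polyC_R (p : {poly R}) : {poly R[i]} := map_poly (real_complex R) p.

Definition is_pole (p q : {poly R}) (s : R[i]) : Prop := (polyC_R q).[s] = 0.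

(* value of the rational function p/q at s (meaningful when s is not a pole) *)
Definition ratval (p q : {poly R}) (s : R[i]) : R[i] :=
  (polyC_R p).[s] / (polyC_R q).[s].

End Defs.

From HB Require Import structures.
From mathcomp Require Import all_boot all_order all_algebra.
From mathcomp Require Import classical_sets reals complex.
From mathcomp Require Import sesquilinear spectral.
From mathcomp Require Import ring lra.
Set Implicit Arguments. Unset Strict Implicit. Unset Printing Implicit Defensive.
Import Order.TTheory GRing.Theory Num.Theory.
Local Open Scope ring_scope.

(* Write T(s0)^-1 = D + f L with D = diag (g_i^-1), and for a vector x put
   y = (D + f L) x and x = w + alpha 1 with w orthogonal to 1.  The columns of L
   sum to zero, so the sum of the entries of y only involves D: it is
   alpha n / gbar + <D, w>, which determines alpha up to O(|w|), and then
   x - gbar/n 1 1^T y = w - O(|w|) 1.  On the other hand |L w| >= lambda_2 |w|,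
   because 1 is in the kernel of L and at most one eigenvalue of L lies below
   lambda_2; so f L w = y - D w - alpha D 1 gives
   (|f| lambda_2 - M2 - M1 M2^2) |w| <= (1 + M1 M2) |y|.  The resulting bound
   |x - gbar/n 1 1^T y| <= (1 + M1 M2)^2 / (|f| lambda_2 - M2 - M1 M2^2) |y|
   forces D + f L to be invertible and, with x = T(s0) y, bounds the norm of
   T(s0) - gbar/n 1 1^T. *)

Section ComplexModulus.
Variable R : realType.
Implicit Types (z w : R[i]) (x : R).

Lemma cabsE z : ((cabs z)%:C)%C = `|z|.
Proof. by case: z => a b; rewrite normc_def. Qed.

Lemma cabs0 : cabs 0 = 0 :> R.
Proof. by apply: complexI; rewrite cabsE normr0 rmorph0. Qed.

Lemma cabs1 : cabs 1 = 1 :> R.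
Proof. by apply: complexI; rewrite cabsE normr1 rmorph1. Qed.

Lemma cabs_ge0 z : 0 <= cabs z.
Proof. by rewrite -ler0c cabsE. Qed.

Lemma cabsM z w : cabs (z * w) = cabs z * cabs w.
Proof. by apply: complexI; rewrite rmorphM !cabsE normrM. Qed.

Lemma cabsV z : cabs z^-1 = (cabs z)^-1.
Proof. by apply: complexI; rewrite fmorphV !cabsE normfV. Qed.

Lemma cabsD z w : cabs (z + w) <= cabs z + cabs w.
Proof. by rewrite -lecR rmorphD !cabsE ler_normD. Qed.

Lemma cabsN z : cabs (- z) = cabs z.
Proof. by apply: complexI; rewrite !cabsE normrN. Qed.

Lemma cabs_real x : cabs ((x%:C)%C) = `|x|.
Proof. by rewrite /cabs /= expr0n addr0 sqrtr_sqr. Qed.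

End ComplexModulus.

Section VectorNorm.
Variables (R : realType) (n : nat).
Local Notation C := R[i].
Implicit Types (x y : 'cV[C]_n) (d : 'rV[C]_n).

Lemma vnorm_ge0 x : 0 <= vnorm x.
Proof. exact: sqrtr_ge0. Qed.

Lemma sqr_vnorm x : vnorm x ^+ 2 = \sum_i cabs (x i 0) ^+ 2.
Proof. by rewrite sqr_sqrtr // sumr_ge0 // => i _; rewrite sqr_ge0. Qed.

Lemma dotmx_trmx x : dotmx x^T x^T = ((vnorm x ^+ 2)%:C)%C.
Proof.
rewrite dotmxE !mxE sqr_vnorm rmorph_sum; apply: eq_bigr => i _.
by rewrite !mxE rmorphXn /= cabsE sqr_normc.
Qed.

Lemma vnormE x : ((vnorm x)%:C)%C = sqrtC (dotmx x^T x^T).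
Proof. by rewrite dotmx_trmx rmorphXn sqrCK // ler0c vnorm_ge0. Qed.

Lemma vnormD x y : vnorm (x + y) <= vnorm x + vnorm y.
Proof.
have [+ _] := triangle_lerif (@dotmx C n) x^T y^T.
by rewrite -linearD -!vnormE -rmorphD lecR.
Qed.

Lemma vnormZ a x : vnorm (a *: x) = cabs a * vnorm x.
Proof.
apply: complexI; rewrite vnormE linearZ /= dnormZ.
rewrite sqrtCM ?nnegrE ?exprn_ge0 ?dnorm_ge0 // sqrCK // -cabsE -vnormE.
by rewrite rmorphM.
Qed.

Lemma vnormN x : vnorm (- x) = vnorm x.
Proof. by rewrite -scaleN1r vnormZ cabsN cabs1 mul1r. Qed.

Lemma vnormB x y : vnorm (x - y) <= vnorm x + vnorm y.
Proof. by rewrite -(vnormN y) vnormD. Qed.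

Lemma vnorm_eq0 x : (vnorm x == 0) = (x == 0).
Proof.
by rewrite -(inj_eq (@complexI _)) vnormE rmorph0 sqrtC_eq0 dnorm_eq0 trmx_eq0.
Qed.

Lemma vnorm0 : vnorm (0 : 'cV[C]_n) = 0.
Proof. by apply/eqP; rewrite vnorm_eq0. Qed.

Lemma vnorm_unitary (U : 'M[C]_n) x : U \is unitarymx -> vnorm (U *m x) = vnorm x.
Proof.
rewrite -trmx_unitary => /unitarymxP UU; apply: complexI; rewrite !vnormE.
by rewrite trmx_mul !dotmxE trmx_mul map_mxM mulmxA -(mulmxA _ U^T) UU mulmx1.
Qed.

Lemma vnorm_const1 : vnorm (const_mx 1 : 'cV[C]_n) = Num.sqrt n%:R.
Proof.
congr Num.sqrt; under eq_bigr do rewrite mxE cabs1 expr1n.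
by rewrite sumr_const card_ord.
Qed.

Lemma cabs_sum_le x : cabs (\sum_i x i 0) <= Num.sqrt n%:R * vnorm x.
Proof.
have -> : \sum_i x i 0 = dotmx x^T (const_mx 1 : 'cV[C]_n)^T.
  by rewrite dotmxE mxE; apply: eq_bigr => i _; rewrite !mxE conjC1 mulr1.
have [+ _] := CauchySchwarz_sqrt (@dotmx C n) x^T (const_mx 1 : 'cV[C]_n)^T.
by rewrite -!vnormE vnorm_const1 -cabsE -rmorphM lecR mulrC.
Qed.

Lemma vnorm_diag_le d M x : 0 <= M -> (forall i, cabs (d 0 i) <= M) ->
  vnorm (diag_mx d *m x) <= M * vnorm x.
Proof.
move=> M0 dM; rewrite -ler_sqr ?nnegrE ?mulr_ge0 ?vnorm_ge0 //.
rewrite exprMn !sqr_vnorm mulr_sumr; apply: ler_sum => i _.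
rewrite mul_diag_mx mxE cabsM exprMn ler_wpM2r ?sqr_ge0 //.
by rewrite ler_sqr ?nnegrE ?cabs_ge0.
Qed.

Lemma vnorm_diag_ge d M x : 0 <= M -> (forall i, x i 0 != 0 -> M <= cabs (d 0 i)) ->
  M * vnorm x <= vnorm (diag_mx d *m x).
Proof.
move=> M0 dM; rewrite -ler_sqr ?nnegrE ?mulr_ge0 ?vnorm_ge0 //.
rewrite exprMn !sqr_vnorm mulr_sumr; apply: ler_sum => i _.
rewrite mul_diag_mx mxE cabsM exprMn.
have [->|xi0] := eqVneq (x i 0) 0; first by rewrite cabs0 expr0n /= !mulr0.
by rewrite ler_wpM2r ?sqr_ge0 // ler_sqr ?nnegrE ?cabs_ge0 ?dM.
Qed.

Lemma cabs_sum_mul_le (d : 'I_n -> C) M x : 0 <= M -> (forall i, cabs (d i) <= M) ->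
  cabs (\sum_i d i * x i 0) <= M * (Num.sqrt n%:R * vnorm x).
Proof.
move=> M0 dM; have -> : \sum_i d i * x i 0 = \sum_i (diag_mx (\row_i d i) *m x) i 0.
  by apply: eq_bigr => i _; rewrite mul_diag_mx !mxE.
apply: le_trans (cabs_sum_le _) _.
by rewrite mulrCA ler_wpM2l ?sqrtr_ge0 ?vnorm_diag_le // => i; rewrite mxE.
Qed.

End VectorNorm.

Lemma char_poly_conj (F : comUnitRingType) n (P A : 'M[F]_n) : P \in unitmx ->
  char_poly (invmx P *m A *m P) = char_poly A.
Proof.
move=> Pu; rewrite /char_poly /char_poly_mx.
set polyP := map_mx polyC P; set polyVP := map_mx polyC (invmx P).
have polyVPP : polyVP *m polyP = 1%:M by rewrite -map_mxM mulVmx ?map_mx1.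
have -> : 'X%:M - map_mx polyC (invmx P *m A *m P) =
          polyVP *m ('X%:M - map_mx polyC A) *m polyP.
  by rewrite mulmxBr mulmxBl mul_mx_scalar -scalemxAl polyVPP scalemx1 !map_mxM.
by rewrite !det_mulmx mulrAC -det_mulmx polyVPP det1 mul1r.
Qed.

Lemma count_le1_eq (I : finType) T (p : pred T) (f : I -> T) :
  (count p [seq f i | i <- index_enum I] <= 1)%N ->
  forall i j, p (f i) -> p (f j) -> i = j.
Proof.
move=> p1 i j pi pj; apply/eqP; apply: contraLR p1 => ij.
rewrite count_map -sum1_count (bigD1 i) //= (bigD1 j) //=.
by rewrite pj eq_sym ij.
Qed.

Section NormalLowerBound.
Variables (R : realType) (n : nat).
Local Open Scope sesquilinear_scope.

Lemma diag_kernel_orthogonal_support (d : 'rV[R[i]]_n) (u z : 'cV[R[i]]_n) (l : R) :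
  0 < l -> (forall i j, cabs (d 0 i) < l -> cabs (d 0 j) < l -> i = j) ->
  u != 0 -> diag_mx d *m u = 0 -> u^t* *m z = 0 ->
  forall i, z i 0 != 0 -> l <= cabs (d 0 i).
Proof.
move=> l_gt0 small_eq u_neq0 du uz i zi; rewrite leNgt; apply/negP => di.
have uj j : j != i -> u j 0 = 0.
  move=> ji; have /matrixP/(_ j 0) := du; rewrite mul_diag_mx !mxE => /eqP.
  rewrite mulf_eq0 => /orP[/eqP dj0|/eqP //]; case/eqP: ji; apply: small_eq di.
  by rewrite dj0 cabs0.
have ui : u i 0 = 0.
  move/matrixP/(_ 0 0): uz; rewrite !mxE (bigD1 i) //= big1 => [|j /uj uj0].
    by rewrite !mxE addr0 => /eqP; rewrite mulf_eq0 conjC_eq0 (negPf zi) orbF => /eqP.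
  by rewrite !mxE uj0 conjC0 mul0r.
case/eqP: u_neq0; apply/matrixP => j k; rewrite ord1 mxE.
by have [->|/uj] := eqVneq j i.
Qed.

Variable A : 'M[R[i]]_n.
Hypothesis A_normal : A \is normalmx.
Local Notation P := (spectralmx A).
Local Notation s := (spectral_diag A).

Lemma spectral_decomposition : A = P^t* *m diag_mx s *m P.
Proof. by rewrite -invmx_unitary ?spectral_unitarymx //; exact/orthomx_spectralP. Qed.

Lemma perm_eq_spectral_diag (mu : seq R[i]) :
  char_poly A = \prod_(m <- mu) ('X - m%:P) ->
  perm_eq [seq s 0 i | i <- index_enum 'I_n] mu.
Proof.
move=> chA; apply: prod_XsubC_eq; rewrite big_map -chA.
rewrite [in RHS](orthomx_spectralP A_normal) char_poly_conj ?spectral_unit //.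
rewrite char_poly_trig ?diag_mx_is_trig //.
by apply: eq_bigr => i _; rewrite mxE eqxx mulr1n.
Qed.

(* In the eigenbasis of [A], [v] lives on the zero eigenvalues and [w] is orthogonal
   to it, so [w] has no component along the (at most one) eigenvalue below [l]. *)
Lemma normalmx_lower_bound (mu : seq R[i]) (l : R) (v w : 'cV[R[i]]_n) :
  char_poly A = \prod_(m <- mu) ('X - m%:P) ->
  (count (fun m => (cabs m < l)%R) mu <= 1)%N -> 0 < l ->
  v != 0 -> A *m v = 0 -> v^t* *m w = 0 ->
  l * vnorm w <= vnorm (A *m w).
Proof.
move=> chA small l_gt0 v_neq0 Av vw.
have Pu := spectral_unitarymx A.
have PtP : P^t* *m P = 1%:M by apply: mulmx1C; exact/unitarymxP.
have small_eq i j : cabs (s 0 i) < l -> cabs (s 0 j) < l -> i = j.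
  apply: (count_le1_eq (p := fun m => (cabs m < l)%R) (f := fun i => s 0 i)).
  by rewrite (permP (perm_eq_spectral_diag chA)).
have Pv_neq0 : P *m v != 0.
  by apply: contraNneq v_neq0 => Pv0; rewrite -[v]mul1mx -PtP -mulmxA Pv0 mulmx0.
have DPv : diag_mx s *m (P *m v) = 0.
  have PA : P *m A = diag_mx s *m P.
    by rewrite [X in P *m X]spectral_decomposition !mulmxA (unitarymxP Pu) mul1mx.
  by rewrite mulmxA -PA -mulmxA Av mulmx0.
have PvPw : (P *m v)^t* *m (P *m w) = 0.
  by rewrite trmx_mul map_mxM -mulmxA (mulmxA (P^t*)) PtP mul1mx.
rewrite [X in X *m w]spectral_decomposition -!mulmxA vnorm_unitary ?trmxC_unitary //.
rewrite -(vnorm_unitary w Pu) vnorm_diag_ge ?(ltW l_gt0) //.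
exact: diag_kernel_orthogonal_support DPv PvPw.
Qed.

End NormalLowerBound.

Lemma count_abs_lt_nth1 (R : realDomainType) (lam : seq R) : sorted <=%R lam ->
  (count (fun x => (`|x| < lam`_1)%R) lam <= 1)%N.
Proof.
case: lam => [|a [|b lam]]; [by []|by rewrite /= addn0 leq_b1|].
move=> /= /andP[_ b_lam]; rewrite [(`|b| < _)%R]ltNge ler_norm add0n.
have /allP lam_ge_b := order_path_min le_trans b_lam.
rewrite (eq_in_count (a2 := pred0)) ?count_pred0 ?addn0 ?leq_b1 // => x /lam_ge_b bx.
by rewrite ltNge (le_trans bx (ler_norm x)).
Qed.

Section Laplacian.
Variables (R : realType) (n : nat) (L : 'M[R]_n).
Hypothesis L_lap : is_laplacian L.
Local Notation Lc := (map_mx (real_complex R) L).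
Local Open Scope sesquilinear_scope.

Lemma laplacianC_normal : Lc \is normalmx.
Proof.
case: L_lap => LT _ _; apply: symmetric_normalmx.
  by apply/is_hermitianmxP; rewrite expr0 scale1r map_mx_id // map_trmx LT.
by apply/mxOverP => i j; rewrite mxE complex_real.
Qed.

Lemma laplacianC_const1 : Lc *m (const_mx 1 : 'cV[R[i]]_n) = 0.
Proof.
case: L_lap => _ _ L1.
by rewrite -(rmorph1 (real_complex R)) -map_const_mx -map_mxM L1 map_mx0.
Qed.

Lemma laplacianC_sum (x : 'cV[R[i]]_n) : \sum_i (Lc *m x) i 0 = 0.
Proof.
have LcT : Lc^T = Lc by case: L_lap => LT _ _; rewrite map_trmx LT.
have -> : \sum_i (Lc *m x) i 0 = ((const_mx 1 : 'cV[R[i]]_n)^T *m Lc *m x) 0 0.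
  by rewrite -mulmxA mxE; apply: eq_bigr => i _; rewrite !mxE mul1r.
by rewrite -LcT -trmx_mul laplacianC_const1 trmx0 mul0mx mxE.
Qed.

Lemma laplacianC_lower_bound (lam : seq R) (w : 'cV[R[i]]_n) :
  (0 < n)%N -> sorted <=%R lam -> char_poly L = \prod_(x <- lam) ('X - x%:P) ->
  \sum_i w i 0 = 0 -> lam`_1 * vnorm w <= vnorm (Lc *m w).
Proof.
move=> n_gt0 lam_sorted chL w_sum.
have [lam1_le0|lam1_gt0] := leP lam`_1 0.
  by apply: le_trans (vnorm_ge0 _); rewrite mulr_le0_ge0 ?vnorm_ge0.
apply: (normalmx_lower_bound laplacianC_normal
          (mu := [seq (x%:C)%C | x <- lam]) (v := const_mx 1)) => //.
- rewrite -map_char_poly chL rmorph_prod big_map; apply: eq_bigr => x _.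
  by rewrite rmorphB /= map_polyX map_polyC.
- rewrite count_map (eq_count (a2 := fun x => (`|x| < lam`_1)%R)).
    exact: count_abs_lt_nth1.
  by move=> x; rewrite -cabs_real.
- apply/eqP => /matrixP/(_ (Ordinal n_gt0) 0) /eqP.
  by rewrite !mxE oner_eq0.
- exact: laplacianC_const1.
- apply/matrixP => i j; rewrite !ord1 !mxE -[RHS]w_sum; apply: eq_bigr => k _.
  by rewrite !mxE conjC1 mul1r.
Qed.

End Laplacian.

Lemma mulmx_const1 (F : pzSemiRingType) n (y : 'cV[F]_n) :
  (const_mx 1 : 'M[F]_n) *m y = (\sum_j y j 0) *: const_mx 1.
Proof.
apply/matrixP => i k; rewrite ord1 !mxE mulr1; apply: eq_bigr => j _.
by rewrite mxE mul1r.
Qed.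

Lemma sum_sub_mean (F : fieldType) n (x : 'cV[F]_n) : n%:R != 0 :> F ->
  \sum_i (x - (n%:R^-1 * \sum_j x j 0) *: const_mx 1) i 0 = 0.
Proof.
move=> n_neq0; under eq_bigr do rewrite !mxE mulr1.
by rewrite sumrB sumr_const card_ord -mulrnAl -mulr_natr mulVf // mul1r subrr.
Qed.

Section DiagonalPlusGap.
Variables (R : realType) (n : nat) (d : 'I_n -> R[i]) (B : 'M[R[i]]_n).
Variables (M1 M2 kappa : R).
Hypothesis n_gt0 : (0 < n)%N.
Hypothesis B_sum : forall x : 'cV[R[i]]_n, \sum_i (B *m x) i 0 = 0.
Hypothesis B1 : B *m (const_mx 1 : 'cV[R[i]]_n) = 0.
Hypothesis B_gap : forall w : 'cV[R[i]]_n,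
  \sum_i w i 0 = 0 -> kappa * vnorm w <= vnorm (B *m w).
Hypothesis d_mean_neq0 : n%:R^-1 * \sum_i d i != 0.
Hypothesis d_mean_inv_le : cabs (n%:R^-1 * \sum_i d i)^-1 <= M1.
Hypothesis d_le : forall i, cabs (d i) <= M2.
Hypothesis gap_gt : M2 + M1 * M2 ^+ 2 < kappa.

Local Notation D := (diag_mx (\row_i d i)).
Local Notation A := (D + B).
Local Notation one := (const_mx 1 : 'cV[R[i]]_n).
(* [h] is the paper's [1 / gbar], so [c *: const_mx 1] is [gbar / n 1 1^T]. *)
Local Notation h := (n%:R^-1 * \sum_i d i).
Local Notation c := (n%:R^-1 * h^-1).
Local Notation N := (n%:R : R).

Let nC_neq0 : n%:R != 0 :> R[i]. Proof. by rewrite pnatr_eq0 -lt0n. Qed.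
Let N_gt0 : 0 < N. Proof. by rewrite ltr0n. Qed.
Let d_sum_neq0 : \sum_i d i != 0.
Proof. by apply: contraNneq d_mean_neq0 => ->; rewrite mulr0. Qed.
Let M2_ge0 : 0 <= M2. Proof. exact: le_trans (cabs_ge0 _) (d_le (Ordinal n_gt0)). Qed.
Let M1_ge0 : 0 <= M1. Proof. exact: le_trans (cabs_ge0 _) d_mean_inv_le. Qed.
Let row_d_le i : cabs ((\row_i d i) 0 i) <= M2. Proof. by rewrite mxE. Qed.
Let mul_sqrtN : Num.sqrt N * Num.sqrt N = N. Proof. by rewrite -expr2 sqr_sqrtr // ltW. Qed.

Lemma cabs_c_le : cabs c <= N^-1 * M1.
Proof.
have cabsN : cabs (n%:R : R[i]) = N.
  by rewrite -(rmorph_nat (real_complex R)) cabs_real ger0_norm ?ler0n.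
by rewrite cabsM cabsV cabsN ler_wpM2l // invr_ge0 ler0n.
Qed.

Variable x : 'cV[R[i]]_n.
Let alpha := n%:R^-1 * \sum_i x i 0.
Let w := x - alpha *: one.
Let beta := \sum_i d i * w i 0.
Let y := A *m x.

Let w_sum : \sum_i w i 0 = 0. Proof. exact: sum_sub_mean. Qed.

Let beta_le : cabs beta <= M2 * (Num.sqrt N * vnorm w).
Proof. exact: cabs_sum_mul_le. Qed.

Lemma sum_Ax : \sum_i y i 0 = alpha * (n%:R * h) + beta.
Proof.
have -> : \sum_i y i 0 = \sum_i d i * x i 0.
  rewrite /y mulmxDl; under eq_bigr do rewrite mxE.
  rewrite big_split /= B_sum addr0; apply: eq_bigr => i _.
  by rewrite mul_diag_mx !mxE.
have -> : \sum_i d i * x i 0 = beta + alpha * \sum_i d i.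
  rewrite /beta mulr_sumr -big_split /=; apply: eq_bigr => i _.
  by rewrite /w !mxE mulr1; ring.
by rewrite [n%:R * _]mulrA mulfV // mul1r addrC.
Qed.

Lemma vnorm_residual_le_centered :
  vnorm (x - c *: (const_mx 1 *m y)) <= (1 + M1 * M2) * vnorm w.
Proof.
have -> : x - c *: (const_mx 1 *m y) = w - (c * beta) *: one.
  rewrite mulmx_const1 sum_Ax scalerA.
  have -> : c * (alpha * (n%:R * h) + beta) = alpha + c * beta.
    by field; rewrite nC_neq0 d_sum_neq0.
  by rewrite scalerDl opprD addrA.
have cbeta : cabs c * cabs beta * Num.sqrt N <= M1 * M2 * vnorm w.
  have -> : M1 * M2 * vnorm w = N^-1 * M1 * (M2 * (Num.sqrt N * vnorm w)) * Num.sqrt N.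
    transitivity (M1 * M2 * vnorm w * (N^-1 * (Num.sqrt N * Num.sqrt N))); last by ring.
    by rewrite mul_sqrtN mulVf ?mulr1 // gt_eqF.
  by rewrite ler_wpM2r ?sqrtr_ge0 // ler_pM ?cabs_ge0 ?cabs_c_le.
apply: le_trans (vnormB _ _) _; rewrite vnormZ vnorm_const1 cabsM; lra.
Qed.

Lemma vnorm_centered_le :
  (kappa - M2 - M1 * M2 ^+ 2) * vnorm w <= (1 + M1 * M2) * vnorm y.
Proof.
have Dx : D *m x = D *m w + alpha *: (D *m one).
  by rewrite scalemxAr -mulmxDr /w subrK.
have Bw : B *m w = y - D *m x.
  by rewrite /y mulmxDl addrAC subrr add0r /w mulmxBr -scalemxAr B1 scaler0 subr0.
have alpha_eq : alpha = c * (\sum_i y i 0 - beta).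
  by rewrite sum_Ax; field; rewrite nC_neq0 d_sum_neq0.
have alpha_le : cabs alpha * (M2 * Num.sqrt N) <= M1 * M2 * (vnorm y + M2 * vnorm w).
  have -> : M1 * M2 * (vnorm y + M2 * vnorm w) =
      N^-1 * M1 * (Num.sqrt N * vnorm y + M2 * (Num.sqrt N * vnorm w)) * (M2 * Num.sqrt N).
    transitivity (M1 * M2 * (vnorm y + M2 * vnorm w) * (N^-1 * (Num.sqrt N * Num.sqrt N))).
      by rewrite mul_sqrtN mulVf ?mulr1 // gt_eqF.
    by ring.
  rewrite ler_wpM2r ?mulr_ge0 ?sqrtr_ge0 // alpha_eq cabsM ler_pM ?cabs_ge0 ?cabs_c_le //.
  by apply: le_trans (cabsD _ _) _; rewrite cabsN lerD ?cabs_sum_le.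
have : kappa * vnorm w <= vnorm y + (M2 * vnorm w + cabs alpha * (M2 * Num.sqrt N)).
  apply: le_trans (B_gap w_sum) _; rewrite Bw Dx.
  apply: le_trans (vnormB _ _) _; rewrite lerD2l; apply: le_trans (vnormD _ _) _.
  rewrite vnormZ lerD ?vnorm_diag_le // ler_wpM2l ?cabs_ge0 //.
  by rewrite -vnorm_const1 vnorm_diag_le.
move: alpha_le; nra.
Qed.

Lemma vnorm_residual_le :
  vnorm (x - c *: (const_mx 1 *m y)) <=
  (M1 * M2 + 1) ^+ 2 / (kappa - M2 - M1 * M2 ^+ 2) * vnorm y.
Proof.
have G_gt0 : 0 < kappa - M2 - M1 * M2 ^+ 2 by move: gap_gt; lra.
apply: le_trans vnorm_residual_le_centered _.
rewrite mulrAC ler_pdivlMr //.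
have k_ge0 : 0 <= 1 + M1 * M2 by rewrite addr_ge0 ?mulr_ge0.
have := vnorm_centered_le; nra.
Qed.

End DiagonalPlusGap.

Section ApproximateInverse.
Variables (R : realType) (n : nat).

Lemma specnorm_le (M : 'M[R[i]]_n) (K : R) :
  (forall x, vnorm x <= 1 -> vnorm (M *m x) <= K) -> specnorm M <= K.
Proof.
move=> MK; apply: ge_sup; last by move=> _ [x x_le1 <-]; exact: MK.
by exists (vnorm (M *m 0)), 0; rewrite //= vnorm0 ler01.
Qed.

Lemma approx_inverse_bound (A E : 'M[R[i]]_n) (K : R) : 0 <= K ->
  (forall x, vnorm (x - E *m (A *m x)) <= K * vnorm (A *m x)) ->
  A \in unitmx /\ specnorm (invmx A - E) <= K.
Proof.
move=> K_ge0 EA.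
have A_unit : A \in unitmx.
  rewrite -unitmx_tr unitmxE unitfE; apply/negP => /det0P[v v_neq0 vA].
  have Av : A *m v^T = 0 by rewrite -[A]trmxK -trmx_mul vA trmx0.
  move: (EA v^T); rewrite Av mulmx0 subr0 vnorm0 mulr0 => vT_le0.
  have /eqP : vnorm v^T = 0 by apply/eqP; rewrite eq_le vT_le0 vnorm_ge0.
  by rewrite vnorm_eq0 trmx_eq0 (negPf v_neq0).
split => //; apply: specnorm_le => z z_le1.
rewrite -[z](mulKVmx A_unit) mulmxBl mulKmx //.
apply: le_trans (EA _) _; rewrite mulKVmx //.
by rewrite ler_piMr.
Qed.

End ApproximateInverse.

Unset Implicit Arguments.

Theorem lemma1 (R : realType) (n : nat) (hn : (2 <= n)%N)
  (gp gq : 'I_n -> {poly R}) (fp fq : {poly R})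
  (Hg : forall i, proper_rat (gp i) (gq i)) (Hf : proper_rat fp fq)
  (L : 'M[R]_n) (HL : is_laplacian L)
  (lam : seq R) (Hsort : sorted <=%R lam)
  (Hchar : char_poly L = \prod_(x <- lam) ('X - x%:P))
  (s0 : R[i]) (Hf0 : ~ is_pole fp fq s0)
  (Hginv : forall i, ~ is_pole (gq i) (gp i) s0)
  (Hh : (n%:R^-1 * \sum_(i < n) ratval (gq i) (gp i) s0) != 0)
  (M1 M2 : R) (HM1 : 0 < M1) (HM2 : 0 < M2)
  (Hgbar : cabs ((n%:R^-1 * \sum_(i < n) ratval (gq i) (gp i) s0)^-1) <= M1)
  (Hmax : forall i, cabs (ratval (gq i) (gp i) s0) <= M2)
  (Hgap : M2 + M1 * M2 ^+ 2 < cabs (ratval fp fq s0) * lam`_1) :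
  let gbar0 := (n%:R^-1 * \sum_(i < n) ratval (gq i) (gp i) s0)^-1 in
  let Minv := diag_mx (\row_i ratval (gq i) (gp i) s0)
              + ratval fp fq s0 *: map_mx (real_complex R) L in
  Minv \in unitmx /\
  specnorm (invmx Minv - (n%:R^-1 * gbar0) *: const_mx 1)
    <= (M1 * M2 + 1) ^+ 2
       / (cabs (ratval fp fq s0) * lam`_1 - M2 - M1 * M2 ^+ 2).
Proof.
move=> gbar0 Minv; set phi := ratval fp fq s0.
have n_gt0 : (0 < n)%N by apply: leq_trans hn.
apply: approx_inverse_bound => [|x]; first by rewrite divr_ge0 ?sqr_ge0 //; lra.
rewrite -scalemxAl; apply: (vnorm_residual_le (B := phi *: _)) => //.
- move=> y; rewrite -scalemxAl; under eq_bigr do rewrite mxE.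
  by rewrite -mulr_sumr laplacianC_sum ?mulr0.
- by rewrite -scalemxAl (laplacianC_const1 HL) scaler0.
- move=> w w_sum.
  by rewrite -scalemxAl vnormZ -mulrA ler_wpM2l ?cabs_ge0 ?laplacianC_lower_bound.
Qed.
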